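(* Let $\Omega\subset\mathbb{R}^2$ be open, $\lambda>0$, and let $u\in L^2(\Omega)$ satisfy $-\Delta u=\lambda u$ in $\Omega$. Let $\mathbf{x}_0\in\Omega$, $h>0$, $\alpha\in(0,1)$, and let $\mathbf{e}^-,\mathbf{e}^+$ be unit vectors with angle $\alpha\pi$ from $\mathbf{e}^-$ to $\mathbf{e}^+$; put $\Gamma^\pm=\{\mathbf{x}_0+t\mathbf{e}^\pm:0\le t\le h\}\subset\Omega$. Suppose $\Gamma^+$ is a singular line of $u$ ($\partial_\nu u=0$ on $\Gamma^+$, $\nu$ a unit normal to $\Gamma^+$) and $\Gamma^-$ is a nodal line of $u$ ($u=0$ on $\Gamma^-$). Let $n\in\mathbb{N}$, $n\ge2$. If $\alpha\neq\frac{2q+1}{2p}$ for all integers $p,q$ with $1\le p\le n-1$ and $0\le q\le p-1$, then $u$ vanishes up to the order $n$ at $\mathbf{x}_0$, i.e. all partial derivatives of $u$ of order at most $n-1$ vanish at $\mathbf{x}_0$.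
   Context: No boundary condition is imposed on $\partial\Omega$; $u$ is real-analytic in $\Omega$. ''Vanishes up to order $n$'' means every homogeneous term of degree $<n$ in the Taylor expansion of $u$ at $\mathbf{x}_0$ vanishes. *)

From HB Require Import structures.
From mathcomp Require Import all_boot all_order all_algebra.
From mathcomp Require Import all_classical all_reals all_analysis.
Set Implicit Arguments.
Unset Strict Implicit.
Unset Printing Implicit Defensive.
Import Order.TTheory GRing.Theory Num.Theory.
Import numFieldNormedType.Exports.
Local Open Scope classical_set_scope.
Local Open Scope ring_scope.

Section Defs.
Variable R : realType.

Definition dx (f : R * R -> R) : R * R -> R :=
  fun p => derive1 (fun t => f (t, p.2)) p.1.
Definition dy (f : R * R -> R) : R * R -> R :=
  fun p => derive1 (fun t => f (p.1, t)) p.2.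

(* iterated partial derivative: a word w of directions
   (false = d/dx, true = d/dy); its order is size w *)
Definition dpartial (w : seq bool) (f : R * R -> R) : R * R -> R :=
  foldr (fun b g => if b then dy g else dx g) f w.

Definition smooth_on (O : set (R * R)) (f : R * R -> R) : Prop :=
  forall (w : seq bool) (p : R * R), O p -> differentiable (dpartial w f) p.

Definition real_analytic_on (O : set (R * R)) (f : R * R -> R) : Prop :=
  forall p0 : R * R, O p0 ->
    exists (r : R) (a : nat -> nat -> R), 0 < r /\
      forall p : R * R, `|p.1 - p0.1| < r -> `|p.2 - p0.2| < r ->
        (exists M : R, forall N : nat,
           \sum_(i < N) \sum_(j < N)
              `|a i j| * `|p.1 - p0.1| ^+ i * `|p.2 - p0.2| ^+ j <= M) /\
        ((fun N : nat => \sum_(i < N) \sum_(j < N)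
              a i j * (p.1 - p0.1) ^+ i * (p.2 - p0.2) ^+ j) @ \oo
           --> f p).

Definition laplacian (f : R * R -> R) : R * R -> R :=
  fun p => dx (dx f) p + dy (dy f) p.

Definition segment (x0 e : R * R) (h : R) : set (R * R) :=
  [set p | exists2 t : R, 0 <= t <= h & p = (x0.1 + t * e.1, x0.2 + t * e.2)].

Definition rotate (theta : R) (e : R * R) : R * R :=
  (cos theta * e.1 - sin theta * e.2, sin theta * e.1 + cos theta * e.2).

Definition vanishes_up_to_order (u : R * R -> R) (n : nat) (x0 : R * R) :=
  forall w : seq bool, (size w < n)%N -> dpartial w u x0 = 0.

End Defs.

(* Suppose all derivatives of u of order < N vanish
   at x0.  By Schwarz's theorem the derivatives of order N form a symmetric
   N-linear form c, and c is trace-free: differentiating -Laplacian u = lambda u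
   along a word v of size N - 2 gives d^v u_xx + d^v u_yy = -lambda d^v u = 0.
   Let nu be e- rotated by pi/2 and S_k = c(nu^k, e-^(N-k)).  Trace-freeness in
   the orthonormal frame (e-, nu) gives S_(k+2) = - S_k, and expanding
   e+ = cos(theta) e- + sin(theta) nu (theta = alpha pi) gives
   c(e+^m, nu^k, e-^(N-m-k)) = cos(m theta) S_k + sin(m theta) S_(k+1).
   Differentiating u = 0 along Gamma- gives S_0 = c(e-^N) = 0.  Differentiating
   the normal derivative along Gamma+ gives c(e+^(N-1), nu+) = 0, which by the
   formula above and S_0 = S_2 = 0 reads cos(N theta) S_1 = 0; cos(N alpha pi) <> 0
   is exactly the hypothesis on alpha.  So every S_k vanishes, and c = 0 because
   (e-, nu) is a basis.  Both differentiations happen at the endpoint x0 of the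
   segments, hence use one-sided derivatives in t. *)

From HB Require Import structures.
From mathcomp Require Import all_boot all_order all_algebra.
From mathcomp Require Import all_classical all_reals all_analysis.
Import Order.TTheory GRing.Theory Num.Theory.
Import numFieldNormedType.Exports.
Local Open Scope classical_set_scope.
Local Open Scope ring_scope.
From mathcomp Require Import ring lra zify.

Section MultilinearForm.
Context {R : comPzRingType}.
Implicit Types (vs : seq (R * R)) (c : seq bool -> R).

(* [mform [:: v_1; ...; v_k] c] is the k-linear form with coefficients
   [c w], [w] a word of size k, evaluated at v_1, ..., v_k:
   the sum over w of [c w * \prod_i (v_i).(w_i)], where [false] selects the
   first coordinate and [true] the second. *)
Fixpoint mform vs c : R :=
  match vs with
  | [::] => c [::]
  | v :: vs' =>
      v.1 * mform vs' (fun w => c (false :: w)) +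
      v.2 * mform vs' (fun w => c (true :: w))
  end.

Lemma eq_mform vs c c' : (forall w, size w = size vs -> c w = c' w) ->
  mform vs c = mform vs c'.
Proof.
elim: vs c c' => [|v vs IH] c c' cc' /=; first exact: cc'.
by congr (_ * _ + _ * _); apply: IH => w hw; apply: cc'; rewrite /= hw.
Qed.

Lemma mform_linear_coef vs c c' a b :
  mform vs (fun w => a * c w + b * c' w) = a * mform vs c + b * mform vs c'.
Proof.
elim: vs c c' => [|v vs IH] c c' //=.
rewrite (IH (fun w => c (false :: w))) (IH (fun w => c (true :: w))); ring.
Qed.

Lemma mform0 vs : mform vs (fun _ => 0) = 0.
Proof. by elim: vs => [|v vs IH] //=; rewrite IH !mulr0 addr0. Qed.

Lemma mform_cat vs ws c :
  mform (vs ++ ws) c = mform vs (fun w => mform ws (fun w' => c (w ++ w'))).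
Proof. by elim: vs c => [|v vs IH] c //=; rewrite !IH. Qed.

Definition unit_vec (b : bool) : R * R := if b then (0, 1) else (1, 0).

Lemma mform_unit_vec w c : mform (map unit_vec w) c = c w.
Proof. by elim: w c => [|[] w IH] c //=; rewrite !IH; ring. Qed.

Lemma mform_linear_at {v v1 v2 : R * R} {a b : R} :
  v = (a * v1.1 + b * v2.1, a * v1.2 + b * v2.2) -> forall vs ws c,
  mform (vs ++ v :: ws) c =
  a * mform (vs ++ v1 :: ws) c + b * mform (vs ++ v2 :: ws) c.
Proof.
move=> -> vs ws; elim: vs => [|x vs IH] c /=; first ring.
rewrite (IH (fun w => c (false :: w))) (IH (fun w => c (true :: w))); ring.
Qed.

Definition symmetric_coef c :=
  forall p b b' w, c (p ++ b :: b' :: w) = c (p ++ b' :: b :: w).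

Lemma mform_swap vs v v' ws c : symmetric_coef c ->
  mform (vs ++ v :: v' :: ws) c = mform (vs ++ v' :: v :: ws) c.
Proof.
elim: vs c => [|x vs IH] c csym /=; last first.
  by rewrite !IH // => p b b' w; [apply: (csym (true :: p))|apply: (csym (false :: p))].
have -> : (fun w => c [:: false, true & w]) = (fun w => c [:: true, false & w]).
  by apply: funext => w; apply: (csym [::]).
ring.
Qed.

Lemma mform_move vs v ws ws' c : symmetric_coef c ->
  mform (vs ++ v :: ws ++ ws') c = mform (vs ++ ws ++ v :: ws') c.
Proof.
move=> csym; elim: ws vs => [|x ws IH] vs //=.
by rewrite mform_swap // -cat_rcons IH cat_rcons.
Qed.

End MultilinearForm.

Section TraceFreeForm.
Context {R : realType}.
Context {c : seq bool -> R} {N : nat} {em : R * R} {th : R}.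
Hypothesis c_sym : symmetric_coef c.
Hypothesis N_gt0 : (0 < N)%N.
Hypothesis em_unit : em.1 ^+ 2 + em.2 ^+ 2 = 1.
Hypothesis c_trace_free : forall w, (2 <= N)%N -> size w = (N - 2)%N ->
  c (w ++ [:: false; false]) + c (w ++ [:: true; true]) = 0.

Let en : R * R := (- em.2, em.1).
Let ep := rotate th em.
Let mixed k := mform (nseq k en ++ nseq (N - k) em) c.

Lemma mform_trace_free_frame vs : (2 <= N)%N -> size vs = (N - 2)%N ->
  mform (vs ++ [:: em; em]) c + mform (vs ++ [:: en; en]) c = 0.
Proof.
move=> N_ge2 size_vs; rewrite !mform_cat -[X in X + _]mul1r -[X in _ + X]mul1r.
rewrite -mform_linear_coef -(mform0 vs); apply: eq_mform => w size_w /=.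
rewrite -[RHS](mulr0 (em.1 ^+ 2 + em.2 ^+ 2)).
rewrite -(@c_trace_free w N_ge2 (etrans size_w size_vs)); ring.
Qed.

Lemma mixed_add2 k : (k + 2 <= N)%N -> mixed (k + 2) = - mixed k.
Proof.
move=> k2N; apply/eqP; rewrite -addr_eq0; apply/eqP.
rewrite /mixed (_ : (N - k = (N - (k + 2)) + 2)%N); last by lia.
set j := (N - (k + 2))%N.
rewrite [(k + 2)%N]addnC !nseqD -[nseq 2 en ++ _]/(en :: en :: _).
rewrite -[nseq 2 em]/[:: em; em] catA.
have -> : mform (en :: en :: nseq k en ++ nseq j em) c =
          mform ((nseq k en ++ nseq j em) ++ [:: en; en]) c.
  have move1 := mform_move [:: en] en (nseq k en ++ nseq j em) [::] c c_sym.
  have move2 := mform_move [::] en (nseq k en ++ nseq j em) [:: en] c c_sym.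
  rewrite cats0 !cat1s in move1; rewrite cat0s in move2.
  by rewrite move1 move2 -catA.
rewrite addrC mform_trace_free_frame //; first lia.
by rewrite size_cat !size_nseq /j; lia.
Qed.

Lemma rotate_frame : ep = (cos th * em.1 + sin th * en.1, cos th * em.2 + sin th * en.2).
Proof. by rewrite /ep /rotate /en /=; congr (_, _); ring. Qed.

Lemma normal_rotate_frame :
  (- ep.2, ep.1) = (- sin th * em.1 + cos th * en.1, - sin th * em.2 + cos th * en.2).
Proof. by rewrite /ep /rotate /en /=; congr (_, _); ring. Qed.

Lemma mform_rotate_pow m k : (m + k <= N)%N ->
  mform (nseq m ep ++ nseq k en ++ nseq (N - m - k) em) c =
  cos (m%:R * th) * mixed k + sin (m%:R * th) * mixed k.+1.
Proof.
elim: m k => [|m IH] k mkN.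
  by rewrite mul0r cos0 sin0 mul1r mul0r addr0 /mixed subn0.
rewrite -[nseq m.+1 ep ++ _]/([::] ++ ep :: (nseq m ep ++ _)) (mform_linear_at rotate_frame).
have move_em := mform_move [::] em (nseq m ep ++ nseq k en) (nseq (N - m.+1 - k) em) c c_sym.
have move_en := mform_move [::] en (nseq m ep) (nseq k en ++ nseq (N - m.+1 - k) em) c c_sym.
rewrite !cat0s -!catA in move_em move_en; rewrite move_em move_en.
rewrite -[em :: _]/(nseq (N - m.+1 - k).+1 em) -[en :: _ ++ _]/(nseq k.+1 en ++ _).
rewrite (_ : (N - m.+1 - k).+1 = N - m - k)%N; last by lia.
rewrite (_ : (N - m.+1 - k = N - m - k.+1)%N); last by lia.
rewrite [X in cos th * X]IH; last by lia.
rewrite [X in sin th * X]IH; last by lia.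
rewrite [m.+1%:R]mulrSr mulrDl mul1r cosD sinD.
case: m {IH move_em move_en} mkN => [|m] mkN.
  by rewrite mul0r sin0 cos0; ring.
rewrite -[k.+2]addn2 mixed_add2; last by lia.
ring.
Qed.

Hypothesis c_nodal : mform (nseq N em) c = 0.
Hypothesis c_singular : mform (nseq N.-1 ep ++ [:: (- ep.2, ep.1)]) c = 0.
Hypothesis cos_Nth_neq0 : cos (N%:R * th) != 0.

Lemma mixed0 : mixed 0 = 0.
Proof. by rewrite /mixed subn0. Qed.

Lemma mixed1 : mixed 1 = 0.
Proof.
have rot_em : mform (nseq N.-1 ep ++ [:: em]) c =
    cos (N.-1%:R * th) * mixed 0 + sin (N.-1%:R * th) * mixed 1.
  rewrite -mform_rotate_pow; last by lia.
  by rewrite (_ : N - N.-1 - 0 = 1)%N; last by lia.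
have rot_en : mform (nseq N.-1 ep ++ [:: en]) c =
    cos (N.-1%:R * th) * mixed 1 + sin (N.-1%:R * th) * mixed 2.
  rewrite -mform_rotate_pow; last by lia.
  by rewrite (_ : N - N.-1 - 1 = 0)%N ?cats0; last by lia.
have sin_mixed2 : sin (N.-1%:R * th) * mixed 2 = 0.
  have [N1|N_ge2] : N = 1%N \/ (2 <= N)%N by lia.
    by rewrite N1 mul0r sin0 mul0r.
  by rewrite -[2%N]/(0 + 2)%N mixed_add2 // mixed0 oppr0 mulr0.
have : cos (N%:R * th) * mixed 1 = 0.
  have -> : N%:R * th = N.-1%:R * th + th.
    by rewrite -[in LHS](prednK N_gt0) mulrSr mulrDl mul1r.
  move: c_singular; rewrite (mform_linear_at normal_rotate_frame).
  rewrite rot_em rot_en mixed0 sin_mixed2 cosD => singular.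
  by apply: etrans singular; ring.
by move/eqP; rewrite mulf_eq0 (negbTE cos_Nth_neq0) => /eqP.
Qed.

Lemma mixed_eq0 k : (k <= N)%N -> mixed k = 0.
Proof.
elim/ltn_ind: k => -[|[|k]] IH kN; [exact: mixed0|exact: mixed1|].
by rewrite -addn2 mixed_add2 ?IH ?oppr0 //; lia.
Qed.

Lemma trace_free_coef_eq0 w : size w = N -> c w = 0.
Proof.
move=> size_w; rewrite -mform_unit_vec -[map _ _]cats0.
suff frame_eq0 : forall vs k j,
    (size vs + k + j = N)%N -> mform (vs ++ nseq k en ++ nseq j em) c = 0.
  by apply: (frame_eq0 _ 0 0)%N; rewrite size_map size_w !addn0.
elim/last_ind => [|vs v IH] k j size_vkj.
  rewrite /= in size_vkj; have kN : (k <= N)%N by lia.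
  by rewrite -(mixed_eq0 k kN) /mixed (_ : N - k = j)%N //; lia.
have v_frame : v = ((v.1 * em.1 + v.2 * em.2) * em.1 + (v.2 * em.1 - v.1 * em.2) * en.1,
                    (v.1 * em.1 + v.2 * em.2) * em.2 + (v.2 * em.1 - v.1 * em.2) * en.2).
  rewrite [v in LHS]surjective_pairing /en /=.
  by congr (_, _); rewrite -[LHS]mulr1 -em_unit; ring.
rewrite size_rcons in size_vkj.
rewrite -cats1 -catA cat1s (mform_linear_at v_frame) mform_move //.
rewrite -[em :: nseq j em]/(nseq j.+1 em) -[en :: _ ++ _]/(nseq k.+1 en ++ _).
by rewrite !IH ?mulr0 ?addr0 //; lia.
Qed.

End TraceFreeForm.

Lemma cos_eq0_pihalfD {R : realType} (N : nat) (x : R) :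
  0 <= x < N%:R * pi -> cos x = 0 -> exists2 q, (q < N)%N & x = pi / 2 + q%:R * pi.
Proof.
have pi_gt0 := @pi_gt0 R.
elim: N x => [|N IH] x x_range cosx0; first by move: x_range; rewrite mul0r; lra.
have [x_lt_pi|pi_le_x] := ltP x pi.
  exists 0%N => //; rewrite mul0r addr0.
  by apply: cos_inj; rewrite ?cos_pihalf // in_itv /=; apply/andP; split; lra.
have [q qN xq] : exists2 q, (q < N)%N & x - pi = pi / 2 + q%:R * pi.
  apply: IH; first by move: x_range; rewrite [N.+1%:R]mulrSr; lra.
  by apply/eqP; rewrite -oppr_eq0 -cosDpi subrK cosx0.
by exists q.+1 => //; rewrite [q.+1%:R]mulrSr; lra.
Qed.

Lemma cos_natmul_neq0 {R : realType} (N : nat) (alpha : R) :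
  0 < alpha < 1 -> (0 < N)%N ->
  (forall q, (q < N)%N -> alpha != (2 * q + 1)%:R / (2 * N)%:R) ->
  cos (N%:R * (alpha * pi)) != 0.
Proof.
move=> alpha_range N_gt0 alpha_neq; apply/eqP => cos0.
have pi_gt0 := @pi_gt0 R.
have N_gt0' : 0 < N%:R :> R by rewrite ltr0n.
have [|q qN Nalpha] := @cos_eq0_pihalfD R N _ _ cos0.
  case/andP: alpha_range => alpha_gt0 alpha_lt1.
  by rewrite !mulr_ge0 ?ltW //= ltr_pM2l // gtr_pMl.
move/eqP: (alpha_neq q qN); apply.
have Npi_neq0 : N%:R * pi != 0 :> R by rewrite mulf_eq0 negb_or !gt_eqF.
apply: (mulIf Npi_neq0).
rewrite (_ : alpha * _ = N%:R * (alpha * pi)); last by ring.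
by rewrite Nalpha !natrD; field; lra.
Qed.

Section MeanValue.
Context {R : realType}.

Lemma MVT_closed {F dF : R -> R} {a b : R} : a <= b ->
  (forall s, a <= s <= b -> is_derive s 1 F (dF s)) ->
  exists2 c, a <= c <= b & F b - F a = dF c * (b - a).
Proof.
move=> ab dF_F.
have dF_open x : x \in `]a, b[ -> is_derive x 1 F (dF x).
  by rewrite in_itv /= => /andP[ax xb]; apply: dF_F; rewrite !ltW.
have F_cont : {within `[a, b], continuous F}.
  apply: derivable_within_continuous => x; rewrite in_itv /= => x_ab.
  by case: (dF_F x x_ab).
by have [c] := MVT_segment ab dF_open F_cont; rewrite in_itv /=; exists c.
Qed.

Lemma second_difference_MVT {F F1 F12 : R -> R -> R} {a1 a2 h : R} : 0 <= h ->
  (forall s t, a1 <= s <= a1 + h -> a2 <= t <= a2 + h ->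
     is_derive s 1 (F ^~ t) (F1 s t)) ->
  (forall s t, a1 <= s <= a1 + h -> a2 <= t <= a2 + h ->
     is_derive t 1 (F1 s) (F12 s t)) ->
  exists s t, [/\ a1 <= s <= a1 + h, a2 <= t <= a2 + h &
    F (a1 + h) (a2 + h) - F (a1 + h) a2 - F a1 (a2 + h) + F a1 a2 = F12 s t * (h * h)].
Proof.
move=> h_ge0 dF dF1.
have a1h : a1 <= a1 + h by lra.
have a2h : a2 <= a2 + h by lra.
have a2_in : a2 <= a2 <= a2 + h by lra.
have a2h_in : a2 <= a2 + h <= a2 + h by lra.
have [s s_in Es] := MVT_closed a1h
  (fun s s_in => is_deriveB (dF s _ s_in a2h_in) (dF s _ s_in a2_in)).
have [t t_in Et] := MVT_closed a2h (dF1 s ^~ s_in).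
exists s, t; split => //.
rewrite (_ : a1 + h - a1 = h) in Es; last by ring.
rewrite (_ : a2 + h - a2 = h) in Et; last by ring.
by rewrite mulrA -Et -Es !fctE; ring.
Qed.

Lemma is_derive_eq0_right {G : R -> R} {t d : R} (h : R) : t < h ->
  is_derive t 1 G d -> (forall s, t <= s < h -> G s = 0) -> d = 0.
Proof.
move=> th [quot_cvg <-] G0.
have right_sub : (0 : R)^'+ `=>` (0 : R)^'.
  move=> P; rewrite /at_right /dnbhs /within /=; apply: filterS => x Px x_gt0.
  by apply: Px; rewrite lt0r_neq0.
have quot_right := cvg_trans (cvg_app _ right_sub) quot_cvg.
have quot_zero : (fun x : R => x^-1 *: ((G \o shift t) (x *: 1) - G t)) @ 0^'+ --> 0.
  apply: cvg_near_cst; near=> x.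
  have x_gt0 : 0 < x by near: x; exact: nbhs_right_gt.
  have x_lt : x < h - t by near: x; apply: nbhs_right_lt; lra.
  rewrite /= !G0 ?subrr ?scaler0 //; first lra.
  by rewrite -[x%:A]/(x * 1) mulr1; lra.
exact: cvg_unique _ quot_right quot_zero.
Unshelve. all: by end_near. Qed.

End MeanValue.

Lemma nbhs_square {R : realType} {p : R * R} {P : set (R * R)} : nbhs p P ->
  exists2 d : R, 0 < d &
    forall q, `|q.1 - p.1| < d -> `|q.2 - p.2| < d -> P q.
Proof.
move=> /nbhs_ballP[d d_gt0 ballP]; exists d => // q q1 q2; apply: ballP.
by split; rewrite /ball /= distrC.
Qed.

Section PartialDerivatives.
Context {R : realType}.
Implicit Types (f g : R * R -> R) (p q e : R * R).

Definition line q e (s : R) : R * R := (q.1 + s * e.1, q.2 + s * e.2).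

Lemma line0 q e : line q e 0 = q.
Proof. by rewrite /line !mul0r !addr0 -surjective_pairing. Qed.

Lemma lineE q e : line q e = fun s => s *: e + q.
Proof.
apply: funext => s; rewrite /line.
by rewrite [RHS]surjective_pairing /=; congr (_, _); rewrite addrC.
Qed.

Lemma lineX p : line (0, p.2) (1, 0) = fun s => (s, p.2).
Proof. by apply: funext => s; rewrite /line /=; congr (_, _); ring. Qed.

Lemma lineY p : line (p.1, 0) (0, 1) = fun s => (p.1, s).
Proof. by apply: funext => s; rewrite /line /=; congr (_, _); ring. Qed.

Lemma line_continuous q e : continuous (line q e).
Proof. by rewrite lineE => t; apply: cvgD; [exact: scalel_continuous|exact: cvg_cst]. Qed.

Lemma is_derive_line g q e t : differentiable g (line q e t) ->
  is_derive t 1 (fun s => g (line q e s)) ('d g (line q e t) e).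
Proof.
move=> dg; rewrite lineE in dg *.
have quotE : (fun s : R => s^-1 *: (g ((s *: 1 + t) *: e + q) - g (t *: e + q))) =
             (fun s => s^-1 *: (g (s *: e + (t *: e + q)) - g (t *: e + q))).
  by apply: funext => s; rewrite scalerDl -[s%:A]/(s * 1) mulr1 addrA.
split; first by rewrite /derivable /= quotE; exact: diff_derivable.
by rewrite /derive /= quotE -/(derive g _ e) deriveE.
Qed.

Lemma is_derive_dx_diff {f p} : differentiable f p ->
  is_derive p.1 1 (fun s => f (s, p.2)) ('d f p (1, 0)).
Proof.
by have := @is_derive_line f (0, p.2) (1, 0) p.1; rewrite lineX -surjective_pairing.
Qed.

Lemma is_derive_dy_diff {f p} : differentiable f p ->
  is_derive p.2 1 (fun s => f (p.1, s)) ('d f p (0, 1)).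
Proof.
by have := @is_derive_line f (p.1, 0) (0, 1) p.2; rewrite lineY -surjective_pairing.
Qed.

Lemma dxE {f p} : differentiable f p -> dx f p = 'd f p (1, 0).
Proof. by move=> /is_derive_dx_diff df; rewrite /dx derive1E derive_val. Qed.

Lemma dyE {f p} : differentiable f p -> dy f p = 'd f p (0, 1).
Proof. by move=> /is_derive_dy_diff df; rewrite /dy derive1E derive_val. Qed.

Lemma is_derive_dx {f p} : differentiable f p ->
  is_derive p.1 1 (fun s => f (s, p.2)) (dx f p).
Proof. by move=> df; rewrite dxE //; apply: is_derive_dx_diff. Qed.

Lemma is_derive_dy {f p} : differentiable f p ->
  is_derive p.2 1 (fun s => f (p.1, s)) (dy f p).
Proof. by move=> df; rewrite dyE //; apply: is_derive_dy_diff. Qed.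

Lemma diff_dxdy f p e : differentiable f p ->
  'd f p e = e.1 * dx f p + e.2 * dy f p.
Proof.
move=> df; rewrite dxE // dyE //.
have e_basis : e = e.1 *: ((1, 0) : R * R) + e.2 *: (0, 1).
  change (e = (e.1 * 1 + e.2 * 0, e.1 * 0 + e.2 * 1)).
  by rewrite [LHS]surjective_pairing; congr (_, _); ring.
by rewrite {1}e_basis linearD !linearZ.
Qed.

Lemma is_derive_line_dxdy g q e t : differentiable g (line q e t) ->
  is_derive t 1 (fun s => g (line q e s))
    (e.1 * dx g (line q e t) + e.2 * dy g (line q e t)).
Proof. by move=> dg; rewrite -diff_dxdy //; apply: is_derive_line. Qed.

Lemma dx_linear f g a b p : differentiable f p -> differentiable g p ->
  dx (fun x => a * f x + b * g x) p = a * dx f p + b * dx g p.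
Proof.
move=> /is_derive_dx df /is_derive_dx dg.
case: (is_deriveD (is_deriveZ a df) (is_deriveZ b dg)) => _ dval.
by rewrite /dx derive1E; exact: dval.
Qed.

Lemma dy_linear f g a b p : differentiable f p -> differentiable g p ->
  dy (fun x => a * f x + b * g x) p = a * dy f p + b * dy g p.
Proof.
move=> /is_derive_dy df /is_derive_dy dg.
case: (is_deriveD (is_deriveZ a df) (is_deriveZ b dg)) => _ dval.
by rewrite /dy derive1E; exact: dval.
Qed.

Lemma dpartial_cat w1 w2 f : dpartial (w1 ++ w2) f = dpartial w1 (dpartial w2 f).
Proof. by rewrite /dpartial foldr_cat. Qed.

Lemma is_derive_mform_line vs (g : seq bool -> R * R -> R) q e t :
  (forall w, differentiable (g w) (line q e t)) ->
  is_derive t 1 (fun s => mform vs (fun w => g w (line q e s)))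
    (mform vs (fun w => e.1 * dx (g w) (line q e t) + e.2 * dy (g w) (line q e t))).
Proof.
elim: vs g => [|v vs IH] g dg /=; first exact: is_derive_line_dxdy.
have IHx := IH (fun w => g (false :: w)) (fun w => dg (false :: w)).
have IHy := IH (fun w => g (true :: w)) (fun w => dg (true :: w)).
exact: is_deriveD (is_deriveZ v.1 IHx) (is_deriveZ v.2 IHy).
Qed.

Lemma is_derive_mform_dpartial_line vs f q e t :
  (forall w, differentiable (dpartial w f) (line q e t)) ->
  is_derive t 1 (fun s => mform vs (fun w => dpartial w f (line q e s)))
    (mform (e :: vs) (fun w => dpartial w f (line q e t))).
Proof.
by move=> df; have := is_derive_mform_line vs _ q e t df; rewrite mform_linear_coef.
Qed.

Section OpenSet.
Context {Omega : set (R * R)}.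
Hypothesis Omega_open : open Omega.

Lemma near_line q e t : Omega (line q e t) -> \forall s \near t, Omega (line q e s).
Proof. by move=> Ot; apply: line_continuous; apply: open_nbhs_nbhs. Qed.

Lemma dx_eq_on f g p : (forall x, Omega x -> f x = g x) -> Omega p ->
  dx f p = dx g p.
Proof.
move=> fg Op; rewrite /dx !derive1E; apply: near_eq_derive.
have : Omega (line (0, p.2) (1, 0) p.1) by rewrite lineX -surjective_pairing.
by move/near_line; rewrite lineX; apply: filterS => s /fg.
Qed.

Lemma dy_eq_on f g p : (forall x, Omega x -> f x = g x) -> Omega p ->
  dy f p = dy g p.
Proof.
move=> fg Op; rewrite /dy !derive1E; apply: near_eq_derive.
have : Omega (line (p.1, 0) (0, 1) p.2) by rewrite lineY -surjective_pairing.
by move/near_line; rewrite lineY; apply: filterS => s /fg.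
Qed.

Lemma dpartial_eq_on w f g : (forall x, Omega x -> f x = g x) ->
  forall p, Omega p -> dpartial w f p = dpartial w g p.
Proof.
move=> fg; elim: w => [|[] w IH] p Op /=; first exact: fg.
- exact: dy_eq_on.
- exact: dx_eq_on.
Qed.

Lemma smooth_on_dpartial w f : smooth_on Omega f -> smooth_on Omega (dpartial w f).
Proof. by move=> sf w' p Op; rewrite -dpartial_cat; apply: sf. Qed.

Lemma dpartial_linear w f g a b : smooth_on Omega f -> smooth_on Omega g ->
  forall p, Omega p ->
  dpartial w (fun x => a * f x + b * g x) p = a * dpartial w f p + b * dpartial w g p.
Proof.
move=> sf sg; elim: w => [|[] w IH] p Op //=.
- rewrite (dy_eq_on _ (fun x => a * dpartial w f x + b * dpartial w g x)) //.
  by apply: dy_linear; [apply: sf|apply: sg].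
- rewrite (dx_eq_on _ (fun x => a * dpartial w f x + b * dpartial w g x)) //.
  by apply: dx_linear; [apply: sf|apply: sg].
Qed.

Lemma dydx_dxdy f p : smooth_on Omega f -> Omega p -> dy (dx f) p = dx (dy f) p.
Proof.
move=> sf Op; set A := dy (dx f); set B := dx (dy f).
have [//|AB_neq] := eqVneq (A p) (B p); exfalso.
pose eps := `|A p - B p| / 2.
have eps_gt0 : 0 < eps by rewrite divr_gt0 // normr_gt0 subr_eq0.
have cont_near (G : R * R -> R) : differentiable G p -> \forall q \near p, `|G p - G q| < eps.
  by move=> /differentiable_continuous/cvgrPdist_lt; apply.
have Omega_near : \forall q \near p, Omega q by apply: open_nbhs_nbhs; split.
have A_near := cont_near A (sf [:: true; false] p Op).
have B_near := cont_near B (sf [:: false; true] p Op).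
have near_p : \forall q \near p, [/\ Omega q, `|A p - A q| < eps & `|B p - B q| < eps].
  by apply: (filterS3 _ _ Omega_near A_near B_near) => q; split.
have [d d_gt0 in_square] := nbhs_square near_p.
pose h := d / 2.
have h_gt0 : 0 < h by rewrite divr_gt0.
have h_lt_d : h < d by rewrite /h; lra.
have square s t : p.1 <= s <= p.1 + h -> p.2 <= t <= p.2 + h ->
    [/\ Omega (s, t), `|A p - A (s, t)| < eps & `|B p - B (s, t)| < eps].
  by move=> s_in t_in; apply: in_square; rewrite /= ger0_norm; lra.
have in_Omega s t : p.1 <= s <= p.1 + h -> p.2 <= t <= p.2 + h -> Omega (s, t).
  by move=> s_in t_in; case: (square s t s_in t_in).
have [s [t [s_in t_in A_diff]]] :=
  second_difference_MVT (F := fun s t => f (s, t)) (F1 := fun s t => dx f (s, t))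
    (F12 := fun s t => A (s, t)) (ltW h_gt0)
    (fun s t s_in t_in => is_derive_dx (sf [::] _ (in_Omega s t s_in t_in)))
    (fun s t s_in t_in => is_derive_dy (sf [:: false] _ (in_Omega s t s_in t_in))).
have [t' [s' [t'_in s'_in B_diff]]] :=
  second_difference_MVT (F := fun t s => f (s, t)) (F1 := fun t s => dy f (s, t))
    (F12 := fun t s => B (s, t)) (ltW h_gt0)
    (fun t s t_in s_in => is_derive_dy (sf [::] _ (in_Omega s t s_in t_in)))
    (fun t s t_in s_in => is_derive_dx (sf [:: true] _ (in_Omega s t s_in t_in))).
clearbody A B.
have AB_eq : A (s, t) = B (s', t').
  apply: (mulIf (x := h * h)); first by rewrite mulf_neq0 ?gt_eqF.
  by rewrite -A_diff -B_diff; ring.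
have [_ As _] := square s t s_in t_in.
have [_ _ Bs] := square s' t' s'_in t'_in.
have : `|A p - B p| <= `|A p - A (s, t)| + `|B p - B (s', t')|.
  have -> : A p - B p = (A p - A (s, t)) - (B p - B (s', t')) by rewrite AB_eq; ring.
  exact: ler_normB.
rewrite /eps in As Bs; lra.
Unshelve. all: by end_near. Qed.

Lemma dpartial_swap2 g b b' x : smooth_on Omega g -> Omega x ->
  dpartial [:: b; b'] g x = dpartial [:: b'; b] g x.
Proof.
move=> sg Ox; case: b; case: b'; [by []|exact: dydx_dxdy|exact/esym/dydx_dxdy|by []].
Qed.

Lemma symmetric_coef_dpartial {f x} : smooth_on Omega f -> Omega x ->
  symmetric_coef (fun w => dpartial w f x).
Proof.
move=> sf Ox p b b' w; rewrite !dpartial_cat; apply: dpartial_eq_on Ox => y Oy.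
by apply: dpartial_swap2 Oy; apply: smooth_on_dpartial.
Qed.

Lemma dpartial_laplacian {f} {lambda : R} :
  smooth_on Omega f -> (forall x, Omega x -> - laplacian f x = lambda * f x) ->
  forall v x, Omega x ->
  dpartial (v ++ [:: false; false]) f x + dpartial (v ++ [:: true; true]) f x =
  - lambda * dpartial v f x.
Proof.
move=> sf f_eigen v x Ox.
have lap_eq y : Omega y ->
    1 * dpartial [:: false; false] f y + 1 * dpartial [:: true; true] f y =
    - lambda * f y + 0 * f y.
  have eigen_eq (a b c : R) : - (a + b) = lambda * c -> 1 * a + 1 * b = - lambda * c + 0 * c.
    by move=> abc; lra.
  by move=> /f_eigen; apply: eigen_eq.
have chain_eq (a b g k d : R) : g = 1 * a + 1 * b -> g = k -> k = - lambda * d + 0 * d ->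
    a + b = - lambda * d.
  by move=> ga gk kd; lra.
rewrite !dpartial_cat.
apply: chain_eq (dpartial_eq_on v _ _ lap_eq x Ox) (dpartial_linear v _ _ _ _ sf sf x Ox).
exact: dpartial_linear (smooth_on_dpartial _ _ sf) (smooth_on_dpartial _ _ sf) x Ox.
Qed.

Lemma mform_dpartial_segment_eq0 {f vs q e h} :
  smooth_on Omega f -> 0 < h -> segment q e h `<=` Omega ->
  (forall p, segment q e h p -> mform vs (fun w => dpartial w f p) = 0) ->
  forall k, mform (nseq k e ++ vs) (fun w => dpartial w f q) = 0.
Proof.
move=> sf h_gt0 seg_in vs_eq0 k.
have on_seg t : 0 <= t <= h -> segment q e h (line q e t) by exists t.
suff : forall t, 0 <= t < h ->
    mform (nseq k e ++ vs) (fun w => dpartial w f (line q e t)) = 0.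
  by move=> /(_ 0); rewrite line0; apply; lra.
elim: k => [|k IH] t t_in; first by apply/vs_eq0/on_seg; lra.
have Ot : Omega (line q e t) by apply/seg_in/on_seg; lra.
have := is_derive_mform_dpartial_line (nseq k e ++ vs) f q e t (fun w => sf w _ Ot).
move/(is_derive_eq0_right h); apply; first lra.
by move=> s s_in; apply: IH; lra.
Qed.

End OpenSet.
End PartialDerivatives.

Theorem theorem3p7 (R : realType) (Omega : set (R * R)) (lambda : R)
  (u : R * R -> R) (x0 em : R * R) (h alpha : R) (n : nat) :
  open Omega ->
  0 < lambda ->
  (* u in L^2(Omega) *)
  measurable Omega ->
  measurable_fun Omega u ->
  (@lebesgue_measure R \x @lebesgue_measure R)%E.-integrable Omega
     (fun p => (u p ^+ 2)%:E) ->
  (* u is real-analytic (hence smooth) in Omega *)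
  real_analytic_on Omega u ->
  smooth_on Omega u ->
  (* -Delta u = lambda u in Omega *)
  (forall p, Omega p -> - laplacian u p = lambda * u p) ->
  Omega x0 -> 0 < h -> 0 < alpha < 1 ->
  em.1 ^+ 2 + em.2 ^+ 2 = 1 ->
  let ep := rotate (alpha * pi) em in
  segment x0 em h `<=` Omega ->
  segment x0 ep h `<=` Omega ->
  (* Gamma^+ is a singular line: normal derivative vanishes,
     with unit normal nu = (- ep.2, ep.1) *)
  (forall p, segment x0 ep h p -> - ep.2 * dx u p + ep.1 * dy u p = 0) ->
  (* Gamma^- is a nodal line *)
  (forall p, segment x0 em h p -> u p = 0) ->
  (2 <= n)%N ->
  (forall p q : nat, (1 <= p <= n - 1)%N -> (q <= p - 1)%N ->
     alpha != (2 * q + 1)%:R / (2 * p)%:R) ->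
  vanishes_up_to_order u n x0.
Proof.
move=> Omega_open _ _ _ _ _ su u_eigen Ox0 h_gt0 alpha_range em_unit ep
  seg_m seg_p u_singular u_nodal _ alpha_neq.
pose c w := dpartial w u x0.
have c_nodal k : mform (nseq k em) c = 0.
  rewrite -[nseq k em]cats0.
  exact: (mform_dpartial_segment_eq0 (vs := [::]) su h_gt0 seg_m u_nodal).
have c_singular k : mform (nseq k ep ++ [:: (- ep.2, ep.1)]) c = 0.
  exact: (mform_dpartial_segment_eq0 (vs := [:: (- ep.2, ep.1)])
    su h_gt0 seg_p u_singular).
suff c_eq0 N : (N < n)%N -> forall w, size w = N -> c w = 0.
  by move=> w /c_eq0; apply.
elim/ltn_ind: N => -[_ _ [] // _|N IH Nn w size_w]; first exact: (c_nodal 0%N).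
have c_sym := symmetric_coef_dpartial Omega_open su Ox0.
have c_trace_free v : (2 <= N.+1)%N -> size v = (N.+1 - 2)%N ->
    c (v ++ [:: false; false]) + c (v ++ [:: true; true]) = 0.
  move=> N_ge2 size_v.
  have cv0 : dpartial v u x0 = 0 by apply: (IH (N.+1 - 2)%N) => //; lia.
  by rewrite /c (dpartial_laplacian Omega_open su u_eigen v x0 Ox0) cv0 mulr0.
have cos_neq0 : cos (N.+1%:R * (alpha * pi)) != 0.
  by apply: cos_natmul_neq0 => // q qN; apply: alpha_neq; lia.
exact: trace_free_coef_eq0 c_sym (ltn0Sn N) em_unit c_trace_free
  (c_nodal _) (c_singular _) cos_neq0 _ size_w.
Qed.
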